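(* Let $p$ be an odd prime, $q$ an odd positive integer, and $a\in(\mathbb{Z}/pq\mathbb{Z})^*$ such that $a\bmod p$ generates $(\mathbb{Z}/p\mathbb{Z})^*$ and $a^{(p-1)/2}\equiv-1\pmod{pq}$. Suppose $q$ has a prime divisor $\ell\ge5$ which is a Fermat prime (i.e. of the form $2^{2^m}+1$) and a prime divisor $\ell'\equiv3\pmod 4$. Then $|S_{pq}(a)\cap(S_{pq}(a)+1)|=0$.
   Context: $S_{pq}(a)=\{a^j:0\le j<p-1\}\subseteq\mathbb{Z}/pq\mathbb{Z}$ and $S+1=\{s+1:s\in S\}$. *)

From mathcomp Require Import all_boot all_order all_algebra.
Set Implicit Arguments. Unset Strict Implicit. Unset Printing Implicit Defensive.
Import GRing.Theory.
Local Open Scope ring_scope.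

Definition Spq (p q : nat) (a : 'Z_(p * q)) : {set 'Z_(p * q)} :=
  [set a ^+ (val j) | j : 'I_(p.-1)].

Definition shift1 (n : nat) (S : {set 'Z_n}) : {set 'Z_n} :=
  [set s + 1 | s in S].

Definition fermat_prime (l : nat) : Prop :=
  prime l /\ exists m : nat, l = (2 ^ (2 ^ m)).+1.

From mathcomp Require Import all_boot all_order all_algebra.
From mathcomp Require Import finfield zify.
Set Implicit Arguments. Unset Strict Implicit. Unset Printing Implicit Defensive.
Import GRing.Theory.
Local Open Scope ring_scope.

(* Reduce everything modulo the prime divisors l' and l of q,
   through the ring morphism Z/pqZ -> F_r (r prime, r | pq).
   - Modulo l' = 3 (mod 4), -1 is not a square in F_l', so a^n = -1 forces
     n odd; with n = (p-1)/2 this shows that (p-1)/2 is odd.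
   - Modulo the Fermat prime l = 2^e + 1, every nonzero A satisfies
     A^(2^e) = 1; if moreover A^n = -1 with n odd, then gcd(n, 2^e) = 1
     forces A = -1.  Hence a = -1 (mod l). *)

Section Reduction.
Variables (m r : nat).
Hypotheses (m_gt1 : (1 < m)%N) (r_prime : prime r) (r_dvd_m : (r %| m)%N).

Definition reduce (x : 'Z_m) : 'F_r := (nat_of_ord x)%:R.

Lemma Zp_natE (x : 'Z_m) : x = (nat_of_ord x)%:R.
Proof.
apply: ord_inj; rewrite val_Zp_nat // modn_small //.
by case: x => i /=; rewrite Zp_cast.
Qed.

(* The reduction is compatible with the embedding of the naturals, because
   m, being a multiple of r, vanishes in F_r. *)
Lemma reduce_nat n : reduce n%:R = n%:R.
Proof.
rewrite /reduce val_Zp_nat // {2}(divn_eq n m) natrD natrM.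
have [k ->] := dvdnP r_dvd_m.
by rewrite natrM pchar_Fp_0 // !mulr0 add0r.
Qed.

Lemma reduceD x y : reduce (x + y) = reduce x + reduce y.
Proof. by rewrite {1}(Zp_natE x) {1}(Zp_natE y) -natrD reduce_nat natrD. Qed.

Lemma reduceM x y : reduce (x * y) = reduce x * reduce y.
Proof. by rewrite {1}(Zp_natE x) {1}(Zp_natE y) -natrM reduce_nat natrM. Qed.

Lemma reduce1 : reduce 1 = 1.
Proof. exact: (reduce_nat 1). Qed.

Lemma reduce0 : reduce 0 = 0.
Proof. exact: (reduce_nat 0). Qed.

Lemma reduceN x : reduce (- x) = - reduce x.
Proof. by apply/eqP; rewrite -subr_eq0 opprK -reduceD addNr reduce0. Qed.

Lemma reduceX x k : reduce (x ^+ k) = reduce x ^+ k.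
Proof. by elim: k => [|k IHk]; rewrite ?reduce1 // !exprS reduceM IHk. Qed.

End Reduction.

Section PrimeField.
Variables (r : nat).
Hypothesis r_prime : prime r.

Lemma Fp_nat_neq0 n : (0 < n < r)%N -> (n%:R : 'F_r) != 0.
Proof.
move=> /andP[n_gt0 n_ltr]; apply/eqP => n_eq0.
have /eqP r_dvd_n : (n %% r)%N = 0%N by rewrite -(val_Fp_nat r_prime) n_eq0.
by have := dvdn_leq n_gt0 r_dvd_n; lia.
Qed.

Lemma Fp_fermat (c : 'F_r) : c != 0 -> c ^+ r.-1 = 1.
Proof.
move=> c_neq0; apply: (mulfI c_neq0); rewrite mulr1 -exprS.
by rewrite prednK ?prime_gt0 // -{2}(expf_card c) card_Fp.
Qed.

Lemma Fp_one_neq_opp_one : (2 < r)%N -> (1 : 'F_r) != -1.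
Proof.
move=> r_gt2; rewrite -subr_eq0 opprK -mulr2n.
by apply: Fp_nat_neq0; lia.
Qed.

(* If r = 3 (mod 4), then -1 is not a square in F_r: otherwise
   1 = c^(r-1) = (c^2)^((r-1)/2) = (-1)^(odd number) = -1. *)
Lemma Fp_opp_one_nonsquare (c : 'F_r) : (r %% 4 = 3)%N -> c ^+ 2 != -1.
Proof.
move=> r_mod4; apply/eqP => c2.
have r_gt2 : (2 < r)%N by have := ltn_pmod r (isT : (0 < 4)%N); lia.
have c_neq0 : c != 0.
  apply: contra_eq_neq c2 => ->; rewrite expr0n eq_sym oppr_eq0; exact: oner_neq0.
have r_predE : r.-1 = (2 * (2 * (r %/ 4)).+1)%N by rewrite {1}(divn_eq r 4); lia.
have := Fp_fermat c_neq0; rewrite r_predE exprM c2 -signr_odd /= oddM /= expr1.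
by move/esym/eqP; rewrite (negbTE (Fp_one_neq_opp_one r_gt2)).
Qed.

Lemma Fp_exp_opp_one_odd (A : 'F_r) n :
  (r %% 4 = 3)%N -> A ^+ n = -1 -> odd n.
Proof.
move=> r_mod4 An; apply/negPn/negP => n_even.
have n_double : (n./2 * 2)%N = n by rewrite muln2 -[RHS]odd_double_half (negbTE n_even).
by have := Fp_opp_one_nonsquare (A ^+ n./2) r_mod4; rewrite -exprM n_double An eqxx.
Qed.

(* For a Fermat prime r = 2^e + 1 > 2, the only element whose odd power
   is -1 is -1 itself: write 1 + u n = k 2^e (Bezout); then
   1 = A^(1 + u n) = A (-1)^u, so A = (-1)^u, and A = 1 is impossible. *)
Lemma Fp_fermat_prime_odd_root (A : 'F_r) e n : r = (2 ^ e).+1 -> (2 < r)%N ->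
  A ^+ n = -1 -> odd n -> A = -1.
Proof.
move=> rE r_gt2 An n_odd.
have one_neq := Fp_one_neq_opp_one r_gt2.
have A_neq0 : A != 0.
  apply: contra_eq_neq An => ->; rewrite expr0n; case: n n_odd => // n _.
  by rewrite eq_sym oppr_eq0 oner_neq0.
have A_pow2e : A ^+ (2 ^ e)%N = 1.
  have -> : (2 ^ e)%N = r.-1 by rewrite rE.
  exact: Fp_fermat.
have cop : coprime (2 ^ e) n.
  by case: e rE {A_pow2e} => [|e] rE; rewrite ?coprime1n // coprime_pexpl // coprime2n n_odd.
have [u _] := Bezoutl n (expn_gt0 2 e); rewrite (eqP cop) => /dvdnP[k bezout].
have : A ^+ (1 + u * n) = 1 by rewrite bezout mulnC exprM A_pow2e expr1n.
rewrite exprD expr1 mulnC exprM An -signr_odd.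
case: (odd u); rewrite /= ?expr1 ?expr0 ?mulrN1 ?mulr1.
  by move/eqP; rewrite eqr_oppLR => /eqP.
by move=> A1; move: An; rewrite A1 expr1n => /eqP; rewrite (negbTE one_neq).
Qed.

(* For r > 3, a sign (-1)^i is never a shifted sign (-1)^j + 1, as the
   latter is 0 or 2 while the former is 1 or -1. *)
Lemma Fp_sign_neq_shifted_sign i j : (3 < r)%N ->
  (-1) ^+ i != (-1) ^+ j + 1 :> 'F_r.
Proof.
move=> r_gt3; rewrite -signr_odd -[(-1) ^+ j]signr_odd.
have three_neq0 : (3%:R : 'F_r) != 0 by apply: Fp_nat_neq0; lia.
case: (odd i); case: (odd j); rewrite /= ?expr1 ?expr0.
- by rewrite addNr oppr_eq0 oner_neq0.
- by rewrite -subr_eq0 -opprD oppr_eq0.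
- by rewrite addNr oner_neq0.
- by rewrite -subr_eq0 opprD addrA subrr add0r oppr_eq0 oner_neq0.
Qed.

End PrimeField.

Theorem mainTheorem10 (p q : nat) (a : 'Z_(p * q)) :
  prime p -> odd p -> odd q -> (0 < q)%N ->
  a \is a GRing.unit ->
  (* a mod p generates (Z/pZ)^* *)
  (forall x : 'F_p, x != 0 -> exists k : nat, ((val a)%:R : 'F_p) ^+ k = x) ->
  a ^+ (p.-1 %/ 2) = -1 ->
  (exists l : nat, fermat_prime l /\ (5 <= l)%N /\ (l %| q)%N) ->
  (exists l' : nat, prime l' /\ (l' %| q)%N /\ l' %% 4 = 3)%N ->
  #|Spq a :&: shift1 (Spq a)| = 0%N.
Proof.
move=> p_prime _ _ q_gt0 _ _ a_half [l [[l_prime [e lE]] [l_ge5 l_dvd_q]]].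
move=> [l' [l'_prime [l'_dvd_q l'_mod4]]].
have pq_gt1 : (1 < p * q)%N by have := prime_gt1 p_prime; nia.
have l_dvd_pq : (l %| p * q)%N by rewrite dvdn_mull.
have l'_dvd_pq : (l' %| p * q)%N by rewrite dvdn_mull.
have reduce_half r : prime r -> (r %| p * q)%N ->
    reduce r a ^+ (p.-1 %/ 2) = -1.
  by move=> r_prime r_dvd; rewrite -reduceX // a_half reduceN // reduce1.
have half_odd : odd (p.-1 %/ 2).
  have a_half_l' := reduce_half l' l'_prime l'_dvd_pq.
  exact: (Fp_exp_opp_one_odd l'_prime l'_mod4 a_half_l').
have a_mod_l : reduce l a = -1.
  by apply: Fp_fermat_prime_odd_root lE _ (reduce_half l l_prime l_dvd_pq) half_odd; lia.
apply: eq_card0 => x; rewrite in_setI; apply/negbTE/andP.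
move=> [/imsetP[i _ ->] /imsetP[_ /imsetP[j _ ->] /(congr1 (reduce l))]].
rewrite reduceD // !reduceX // reduce1 // a_mod_l; apply/eqP.
by apply: Fp_sign_neq_shifted_sign; lia.
Qed.
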